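(* Let $V$ be an $m$-dimensional real vector space carrying two inner products $g$ and $g_E$, and let $\mathrm{II}$ be a symmetric bilinear form on $V$ which is positive semidefinite, with $g_E$-trace $\bar H=\mathrm{tr}_{g_E}\mathrm{II}>0$. Let $H>0$ satisfy $H^2 g(v,v)\ge\bar H^2 g_E(v,v)$ for all $v\in V$. Then for every $g$-orthonormal basis $\{\tau_i\}_{i=1}^m$ and every $g_E$-orthonormal basis $\{\bar\tau_i\}_{i=1}^m$ of $V$, $$H\;\ge\;\sum_{i=1}^m\mathrm{II}(\tau_i,\bar\tau_i).$$
   Context: In the paper this is applied at a point $p$ of $\partial M$ with $V=T_p\partial M$ identified with $T_{F(p)}\partial\bar M$ via the boundary diffeomorphism $F:\partial M\to\partial\bar M$ ($\bar M\subset\mathbb R^{n+2}$ convex), $g$ the induced Riemannian metric, $g_E$ the pulled-back Euclidean metric, $\mathrm{II}$ the pulled-back Euclidean second fundamental form of $\partial\bar M$, $\bar H$ its mean curvature and $H=H_{\partial M}$ the mean curvature of $\partial M$; the hypothesis is then the rescaled mean curvature comparison $H_{\partial M}^2g\ge \bar H^2 g_E$. *)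

From mathcomp Require Import all_boot all_order all_algebra.
Set Implicit Arguments. Unset Strict Implicit. Unset Printing Implicit Defensive.
Import Order.TTheory GRing.Theory Num.Theory.
Local Open Scope ring_scope.

(* Model: V = R^m as row vectors 'rV[R]_m.  A bilinear form on V is
   represented by its Gram matrix A : 'M[R]_m, acting as
   bform A u v = u A v^T. *)
Definition bform (R : comNzRingType) (m : nat) (A : 'M[R]_m) (u v : 'rV[R]_m) : R :=
  (u *m A *m v^T) 0 0.

Definition sym_gram (R : comNzRingType) (m : nat) (A : 'M[R]_m) : Prop :=
  A^T = A.

Definition inner_product (R : numFieldType) (m : nat) (A : 'M[R]_m) : Prop :=
  sym_gram A /\ forall v : 'rV[R]_m, v != 0 -> 0 < bform A v v.

Definition psd_form (R : numFieldType) (m : nat) (A : 'M[R]_m) : Prop :=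
  forall v : 'rV[R]_m, 0 <= bform A v v.

(* trace of the bilinear form B with respect to the inner product G:
   tr_G B = g^{ij} B_{ij} = \tr (G^{-1} B) *)
Definition trace_wrt (R : numFieldType) (m : nat) (G B : 'M[R]_m) : R :=
  \tr (invmx G *m B).

Definition orthonormal_basis (R : numFieldType) (m : nat) (G T : 'M[R]_m) : Prop :=
  forall i j : 'I_m, bform G (row i T) (row j T) = (i == j)%:R.

From mathcomp Require Import all_boot all_order all_algebra.
From mathcomp Require Import ring lra.
Set Implicit Arguments. Unset Strict Implicit. Unset Printing Implicit Defensive.
Import Order.TTheory GRing.Theory Num.Theory.
Local Open Scope ring_scope.

(* Put K := tr_gE II.  Inverting Gram matrices reverses inequalities, so
   K^2 gE <= H^2 g gives K^2 g^-1 <= H^2 gE^-1; since II is a nonnegative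
   combination of rank-one forms u^T u, pairing with II yields
   K^2 tr_g II <= H^2 tr_gE II = H^2 K.  Positivity of II at K tau_i - H taubar_i,
   summed over i, gives 2 K H sum_i II(tau_i, taubar_i) <= K^2 tr_g II + H^2 K,
   which is at most 2 K H^2. *)

Section BilinearForm.
Variables (R : realFieldType) (n : nat).
Implicit Types (A B G T : 'M[R]_n) (u v x y : 'rV[R]_n).

Lemma mulmx_trC x y : (x *m y^T) 0 0 = (y *m x^T) 0 0.
Proof. by rewrite !mxE; apply: eq_bigr => j _; rewrite !mxE mulrC. Qed.

Lemma mulmx_tr_eq0 x : (x *m x^T) 0 0 = 0 -> x = 0.
Proof.
have sq j : x 0 j * x^T j 0 = x 0 j ^+ 2 by rewrite mxE expr2.
rewrite mxE => /psumr_eq0P x0; apply/rowP => j; rewrite mxE.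
by apply/eqP; rewrite -sqrf_eq0 -sq x0 // => k _; rewrite sq sqr_ge0.
Qed.

Lemma bform_tr A u v : bform A^T u v = bform A v u.
Proof.
rewrite /bform; transitivity ((v *m A *m u^T)^T 0 0); last by rewrite mxE.
by rewrite !trmx_mul trmxK mulmxA.
Qed.

Lemma bform_sym A u v : sym_gram A -> bform A u v = bform A v u.
Proof. by move=> symA; rewrite -bform_tr symA. Qed.

Lemma bform_row A B T i j : bform B (row i A) (row j T) = (A *m B *m T^T) i j.
Proof. by rewrite /bform -row_mul !mxE; apply: eq_bigr => k _; rewrite !mxE. Qed.

Lemma bform_rank1 u y : bform (u^T *m u) y y = ((u *m y^T) 0 0) ^+ 2.
Proof. by rewrite /bform !mulmxA -mulmxA mxE big_ord1 mulmx_trC expr2. Qed.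

Lemma bformBZ A B c y : bform (A - c *: B) y y = bform A y y - c * bform B y y.
Proof. by rewrite /bform mulmxBr mulmxBl -scalemxAr -scalemxAl !mxE. Qed.

Lemma bformZBZ A a b x y :
  bform A (a *: x - b *: y) (a *: x - b *: y) =
  a ^+ 2 * bform A x x - a * b * (bform A x y + bform A y x) + b ^+ 2 * bform A y y.
Proof.
rewrite /bform linearB !linearZ /= !mulmxDl !mulmxDr -!scalemxAl -!scalemxAr.
by rewrite !mulNmx !mulmxN !mxE; ring.
Qed.

Lemma psd_form_cross_le A a b x y : sym_gram A -> psd_form A ->
  2 * (a * b) * bform A x y <= a ^+ 2 * bform A x x + b ^+ 2 * bform A y y.
Proof.
move=> symA psdA; have := psdA (a *: x - b *: y).
by rewrite bformZBZ (bform_sym _ _ symA); lra.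
Qed.

Lemma inner_product_psd G : inner_product G -> psd_form G.
Proof.
move=> [_ posG] v; have [->|/posG/ltW//] := eqVneq v 0.
by rewrite /bform !mul0mx mxE.
Qed.

Lemma inner_product_unitmx G : inner_product G -> G \in unitmx.
Proof.
move=> [_ posG]; rewrite -row_free_unit -kermx_eq0; apply/negPn/negP => kerG.
have [i kerGi] : exists i, row i (kermx G) != 0.
  apply/existsP; apply: contraR kerG; rewrite negb_exists => /forallP kerG0.
  by apply/eqP/row_matrixP => i; rewrite row0; apply/eqP/negPn.
have := posG _ kerGi; rewrite /bform -row_mul mulmx_ker row0 mul0mx mxE.
by rewrite ltxx.
Qed.

Lemma orthonormal_basis_mx G T : orthonormal_basis G T -> T *m G *m T^T = 1%:M.
Proof. by move=> onT; apply/matrixP => i j; rewrite -bform_row onT mxE. Qed.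

Lemma orthonormal_basis_invmx G T : orthonormal_basis G T -> invmx G = T^T *m T.
Proof.
move=> /orthonormal_basis_mx TGT.
have /mulmx1C GTT : T *m (G *m T^T) = 1%:M by rewrite mulmxA.
have [uG _] : G \in unitmx /\ T^T *m T \in unitmx by apply: mulmx1_unit; rewrite mulmxA.
by rewrite -[RHS](mulKmx uG) [G *m _]mulmxA GTT mulmx1.
Qed.

Lemma trace_wrt_orthonormal G T B : orthonormal_basis G T ->
  trace_wrt G B = \sum_i bform B (row i T) (row i T).
Proof.
move=> /orthonormal_basis_invmx invG.
rewrite /trace_wrt invG -mulmxA mxtrace_mulC /mxtrace.
by apply: eq_bigr => i _; rewrite bform_row.
Qed.

Lemma mxtrace_mul_rank1 A u : \tr (A *m (u^T *m u)) = bform A u u.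
Proof. by rewrite mulmxA mxtrace_mulC mulmxA trace_mx11. Qed.

End BilinearForm.

Lemma affine_ge0_slope0 (R : realFieldType) (b d : R) : (forall c, 0 <= b * c + d) -> b = 0.
Proof.
move=> ge0; apply/eqP/negPn/negP => b0.
by have := ge0 (- (d + 1) / b); rewrite mulrCA divff // mulr1; lra.
Qed.

Section SchurComplement.
Variables (R : realFieldType) (n : nat) (a : R) (b : 'rV[R]_n) (d : 'M[R]_n).

Definition schur_compl : 'M[R]_n := d - a^-1 *: (b^T *m b).

Lemma bform_block c y :
  bform (block_mx a%:M b b^T d) (row_mx c%:M y) (row_mx c%:M y) =
  a * c ^+ 2 + 2 * c * (b *m y^T) 0 0 + bform d y y.
Proof.
rewrite /bform tr_row_mx mul_row_block mul_row_col tr_scalar_mx !mulmxDl.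
rewrite !mul_mx_scalar !mul_scalar_mx -!scalemxAl -[y *m b^T]trmxK trmx_mul trmxK.
move: (b *m y^T) (y *m d *m y^T) => s t.
by rewrite !mxE eqxx mulr1n; ring.
Qed.

Lemma sym_schur_compl : sym_gram d -> sym_gram schur_compl.
Proof. by move=> symd; rewrite /sym_gram linearB linearZ /= trmx_mul trmxK symd. Qed.

Hypothesis psdP : psd_form (block_mx a%:M b b^T d).

Let psd_block c y : 0 <= a * c ^+ 2 + 2 * c * (b *m y^T) 0 0 + bform d y y.
Proof. by rewrite -bform_block; apply: psdP. Qed.

Lemma psd_block_corner_ge0 : 0 <= a.
Proof. by have := psd_block 1 0; rewrite trmx0 mulmx0 /bform !mul0mx !mxE; lra. Qed.

Lemma psd_block_corner_eq0 : a = 0 -> b = 0.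
Proof.
move=> a0; apply: mulmx_tr_eq0.
have /eqP : 2 * (b *m b^T) 0 0 = 0.
  by apply: (@affine_ge0_slope0 _ _ (bform d b b)) => c; have := psd_block c b; rewrite a0; lra.
by rewrite mulf_eq0 pnatr_eq0 => /eqP.
Qed.

(* [bform schur_compl y y] is the block form at [row_mx c%:M y], minimized over [c]. *)
Lemma psd_schur_compl : psd_form schur_compl.
Proof.
move=> y; rewrite bformBZ bform_rank1.
have := psd_block (- (a^-1 * (b *m y^T) 0 0)) y.
move: ((b *m y^T) 0 0) (bform d y y) => s t.
have [->|a0] := eqVneq a 0; first by rewrite invr0; lra.
suff -> : a * (- (a^-1 * s)) ^+ 2 + 2 * - (a^-1 * s) * s + t = t - a^-1 * s ^+ 2 by [].
by field.
Qed.

Lemma block_schur_complE :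
  block_mx a%:M b b^T d =
  a *: ((row_mx 1%:M (a^-1 *: b))^T *m row_mx 1%:M (a^-1 *: b)) +
  block_mx (0 : 'M_1) 0 0 schur_compl.
Proof.
have aVb : a * a^-1 *: b = b.
  by have [/psd_block_corner_eq0->|/divff->] := eqVneq a 0; rewrite ?scaler0 ?scale1r.
have aVV : a * a^-1 * a^-1 = a^-1.
  by have [->|a0] := eqVneq a 0; rewrite ?invr0 ?mul0r //; field.
rewrite tr_row_mx tr_scalar_mx mul_col_row scale_block_mx add_block_mx !addr0.
rewrite !mulmx1 !mul1mx scalemx1 [(a^-1 *: b)^T]linearZ /= -!scalemxAl !scalerA.
congr block_mx; first by rewrite aVb.
  by rewrite -{1}aVb linearZ.
by rewrite -scalemxAr scalerA aVV /schur_compl addrC subrK.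
Qed.

End SchurComplement.

Lemma sym_block_mx (R : realFieldType) n (P : 'M[R]_(1 + n)) : sym_gram P ->
  exists a b d, sym_gram d /\ P = block_mx a%:M b b^T d.
Proof.
rewrite /sym_gram -{1 2}[P]submxK tr_block_mx => /eq_block_mx[_ _ dlP drP].
exists (ulsubmx P 0 0), (ursubmx P), (drsubmx P); split=> //.
by rewrite -mx11_scalar dlP submxK.
Qed.

Lemma psd_form_sum_rank1 (R : realFieldType) n (P : 'M[R]_n) :
  sym_gram P -> psd_form P ->
  exists (w : 'I_n -> R) (u : 'I_n -> 'rV[R]_n),
    (forall k, 0 <= w k) /\ P = \sum_k w k *: ((u k)^T *m u k).
Proof.
elim: n P => [|n IH] P symP psdP.
  by exists (fun=> 0), (fun=> 0); split=> //; apply/matrixP => -[].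
have [a [b [d [symd defP]]]] := sym_block_mx symP.
rewrite defP in psdP.
have [w [u [w_ge0 defS]]] := IH _ (sym_schur_compl a b symd) (psd_schur_compl psdP).
exists (fun k => oapp w a (unlift ord0 k)).
exists (fun k => oapp (fun k' => row_mx 0 (u k')) (row_mx 1%:M (a^-1 *: b)) (unlift ord0 k)).
split=> [k|].
  by case: unlift => [k'|] /=; [apply: w_ge0 | apply: psd_block_corner_ge0 psdP].
rewrite big_ord_recl /= unlift_none /=.
under eq_bigr do rewrite liftK /=.
have blockD : {morph (@block_mx R 1 n 1 n 0 0 0) : x y / x + y}.
  by move=> x y; rewrite add_block_mx !addr0.
have -> : \sum_k w k *: ((row_mx (0 : 'rV_1) (u k))^T *m row_mx 0 (u k)) =
          block_mx (0 : 'M_1) 0 0 (schur_compl a b d).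
  rewrite defS (big_morph _ blockD (block_mx0 _ _ _ _ _)); apply: eq_bigr => k _.
  by rewrite tr_row_mx mul_col_row trmx0 !mul0mx mulmx0 scale_block_mx !scaler0.
by rewrite defP (block_schur_complE psdP).
Qed.

Section Comparison.
Variables (R : realFieldType) (n : nat) (g gE : 'M[R]_n) (a b : R).
Hypotheses (ip_g : inner_product g) (ip_gE : inner_product gE).
Hypotheses (a_ge0 : 0 <= a) (b_gt0 : 0 < b).
Hypothesis gE_le_g : forall v, a * bform gE v v <= b * bform g v v.

(* Inverting the Gram matrices reverses the comparison: test the hypothesis on
   [z := u g^-1] and pair it with [w := u gE^-1] through [psd_form_cross_le]. *)
Lemma bform_invmx_le u : a * bform (invmx g) u u <= b * bform (invmx gE) u u.
Proof.
have [symgE _] := ip_gE.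
have [ug ugE] := (inner_product_unitmx ip_g, inner_product_unitmx ip_gE).
pose z := u *m invmx g; pose w := u *m invmx gE.
have gzz : bform g z z = bform (invmx g) u u.
  by rewrite -[RHS]bform_tr /bform /z mulmxKV // trmx_mul mulmxA.
have gEww : bform gE w w = bform (invmx gE) u u.
  by rewrite /bform /w mulmxKV // trmx_mul trmx_inv symgE mulmxA.
have gEzw : bform gE z w = bform (invmx g) u u.
  by rewrite /bform /w trmx_mul trmx_inv symgE mulmxA mulmxK // /z -mulmxA.
have := psd_form_cross_le a b z w symgE (inner_product_psd ip_gE).
have := gE_le_g z; rewrite gzz gEww gEzw.
move: (bform (invmx g) u u) (bform gE z z) (bform (invmx gE) u u) => s t r le_ts le_cross.
have le_aat : a * (a * t) <= a * (b * s) by apply: ler_wpM2l.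
by rewrite -(ler_pM2l b_gt0); lra.
Qed.

Lemma trace_wrt_le B : sym_gram B -> psd_form B ->
  a * trace_wrt g B <= b * trace_wrt gE B.
Proof.
move=> symB /(psd_form_sum_rank1 symB)[w [u [w_ge0 ->]]].
rewrite /trace_wrt !mulmx_sumr !raddf_sum /= !mulr_sumr; apply: ler_sum => k _.
rewrite -!scalemxAr !mxtraceZ !mxtrace_mul_rank1 mulrCA [b * _]mulrCA.
by apply: ler_wpM2l; [apply: w_ge0 | apply: bform_invmx_le].
Qed.

End Comparison.

Theorem proposition3p1 (R : realFieldType) (m : nat) (g gE II : 'M[R]_m) (H : R) :
  inner_product g -> inner_product gE ->
  sym_gram II -> psd_form II ->
  0 < trace_wrt gE II ->
  0 < H ->
  (forall v : 'rV[R]_m, (trace_wrt gE II) ^+ 2 * bform gE v v <= H ^+ 2 * bform g v v) ->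
  forall tau taubar : 'M[R]_m,
    orthonormal_basis g tau -> orthonormal_basis gE taubar ->
    \sum_(i < m) bform II (row i tau) (row i taubar) <= H.
Proof.
move=> ip_g ip_gE symII psdII K_gt0 H_gt0 gE_le_g tau taubar on_tau on_taubar.
set K := trace_wrt gE II in K_gt0 gE_le_g *.
set P := \sum_i bform II (row i tau) (row i taubar).
have := trace_wrt_le ip_g ip_gE (sqr_ge0 K) (exprn_gt0 2 H_gt0) gE_le_g symII psdII.
rewrite -/K (trace_wrt_orthonormal II on_tau) => le_traces.
have cross : 2 * (K * H) * P <=
    K ^+ 2 * \sum_i bform II (row i tau) (row i tau) + H ^+ 2 * K.
  rewrite [X in _ + _ * X](trace_wrt_orthonormal II on_taubar) !mulr_sumr -big_split /=.
  by apply: ler_sum => i _; apply: psd_form_cross_le.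
have KH_gt0 : 0 < 2 * (K * H) by rewrite !mulr_gt0.
by rewrite -(ler_pM2l KH_gt0); lra.
Qed.
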